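(* Let $n\geq2$, $A\in\mathrm{SL}_n(\mathbb Z)$, $B=(b_{ij})\in M_n(\mathbb R)$ with $\exp(B)=A$, and $M=\Gamma\backslash G(B)$ as in the context. Let $g$ be a homogeneous metric on $M$ for which $(V_1,\dots,V_n,Y)$ is an orthonormal frame, where $V_1,\dots,V_n$ is a basis of the space of left-invariant vertical fields $\mathrm{span}(X_1,\dots,X_n)$, let $C$ be the matrix of the endomorphism $f:X\mapsto[Y,X]$ of $\mathrm{span}(X_1,\dots,X_n)$ in the basis $(V_1,\dots,V_n)$, and let $a$ be the supremum of the absolute value of the sectional curvature of $(M,g)$. There exist constants $\tau(n)>0$ and $\kappa(B)$ such that $$\tau^{-1}a\leq \operatorname{Tr}(C\,{}^tC)\leq\tau a+\kappa.$$
   Context: $G=G(B)$ is the image of $(x_1,\dots,x_n,y)\in\mathbb R^{n+1}\mapsto\begin{pmatrix}\exp(yB)&0&x\\0&1&y\\0&0&1\end{pmatrix}\in\mathrm{GL}_{n+2}(\mathbb R)$ (blocks of sizes $n,1,1$), $\Gamma$ is the image of $\mathbb Z^{n+1}$. $X_1,\dots,X_n,Y$ are the left-invariant fields on $G$ (descending to $M$) generated at the identity by $\partial/\partial x_i,\partial/\partial y$; they satisfy $[X_i,X_j]=0$, $[Y,X_i]=\sum_j b_{ji}X_j$, so $f$ has matrix $B$ in the basis $(X_i)$. A homogeneous metric is one induced by a left-invariant metric on $G$. *)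

From HB Require Import structures.
From mathcomp Require Import all_boot all_order all_algebra.
From mathcomp Require Import all_classical all_reals all_analysis.
Set Implicit Arguments. Unset Strict Implicit. Unset Printing Implicit Defensive.
Import Order.TTheory GRing.Theory Num.Theory.
Import numFieldNormedType.Exports.
Local Open Scope classical_set_scope.
Local Open Scope ring_scope.

Section SolvDefs.
Variable R : realType.

Definition expmx_is (n : nat) (B A : 'M[R]_n) : Prop :=
  forall i j, (fun N : nat => \sum_(k < N) (iter k (mulmx B) 1%:M) i j / (k`!)%:R)
                @ \oo --> A i j.

(** Standard inner product on coordinate column vectors (coordinates taken
    in an orthonormal frame). *)
Definition vdot (m : nat) (u v : 'cV[R]_m) : R := (u^T *m v) 0 0.

(** Lie bracket of the Lie algebra of G(B), in coordinates w.r.t. the frame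
    (V_1,...,V_n,Y): [V_i,V_j]=0, [Y,V_j] = sum_l C_lj V_l. A vector u is
    col_mx x s, meaning sum_i x_i V_i + s Y. *)
Definition solv_bracket (n : nat) (C : 'M[R]_n) (u v : 'cV[R]_(n + 1))
  : 'cV[R]_(n + 1) :=
  col_mx ((dsubmx u 0 0) *: (C *m usubmx v) - (dsubmx v 0 0) *: (C *m usubmx u))
         (0 : 'cV[R]_1).

(** Levi-Civita connection of the left-invariant metric making the coordinate
    frame orthonormal, on left-invariant fields, via the Koszul formula
    2<nabla_u v, w> = <[u,v],w> - <[v,w],u> + <[w,u],v>. *)
Definition lc_conn (m : nat) (br : 'cV[R]_m -> 'cV[R]_m -> 'cV[R]_m)
  (u v : 'cV[R]_m) : 'cV[R]_m :=
  \col_k (2^-1 * (vdot (br u v) (delta_mx k 0) - vdot (br v (delta_mx k 0)) u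
                  + vdot (br (delta_mx k 0) u) v)).

Definition curv (m : nat) (br : 'cV[R]_m -> 'cV[R]_m -> 'cV[R]_m)
  (u v w : 'cV[R]_m) : 'cV[R]_m :=
  lc_conn br u (lc_conn br v w) - lc_conn br v (lc_conn br u w)
  - lc_conn br (br u v) w.

Definition sec_curv (m : nat) (br : 'cV[R]_m -> 'cV[R]_m -> 'cV[R]_m)
  (u v : 'cV[R]_m) : R :=
  vdot (curv br u v v) u / (vdot u u * vdot v v - (vdot u v) ^+ 2).

Definition sup_abs_sec (m : nat) (br : 'cV[R]_m -> 'cV[R]_m -> 'cV[R]_m) : R :=
  sup [set x : R | exists u v : 'cV[R]_m,
         \rank (row_mx u v) = 2%N /\ x = `|sec_curv br u v|].

End SolvDefs.

From HB Require Import structures.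
From mathcomp Require Import all_boot all_order all_algebra.
From mathcomp Require Import all_classical all_reals all_analysis.
From mathcomp Require Import ring lra.
Import Order.TTheory GRing.Theory Num.Theory.
Local Open Scope ring_scope.
Set Implicit Arguments. Unset Strict Implicit. Unset Printing Implicit Defensive.

(** In the orthonormal frame (V_1, ..., V_n, Y) the bracket is
    [x + sY, y + tY] = s Cy - t Cx, so |[u, v]|^2 <= 4 tr(C C^T) |u|^2 |v|^2.
    Through the Koszul formula this bounds the Levi-Civita connection, hence
    every sectional curvature, by tr(C C^T) times a constant depending only
    on n.  Conversely, the curvatures of the planes (V_i, Y) add up to
    -(tr(C^2) + tr(C C^T))/2, and tr(C^2) = tr(B^2) because C is similar to B,
    so tr(C C^T) <= 2 n a - tr(B^2). *)

Lemma linear_fun0 (R : pzRingType) (U : lmodType R) (V : zmodType)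
  (s : GRing.Scale.law R V) (f : U -> V) : linear_for s f -> f 0 = 0.
Proof. by move=> /zmod_morphism_linear fB; rewrite -(subrr (0 : U)) fB subrr. Qed.

Section InnerProduct.
Variables (R : realType) (m : nat).
Implicit Types (a : R) (u v w p q : 'cV[R]_m).

Lemma vdotE u v : vdot u v = \sum_i u i 0 * v i 0.
Proof. by rewrite /vdot !mxE; apply: eq_bigr => i _; rewrite mxE. Qed.

Lemma vdotC u v : vdot u v = vdot v u.
Proof. by rewrite !vdotE; apply: eq_bigr => i _; rewrite mulrC. Qed.

Lemma vdotDl u v w : vdot (u + v) w = vdot u w + vdot v w.
Proof. by rewrite /vdot linearD mulmxDl mxE. Qed.

Lemma vdotZl a u w : vdot (a *: u) w = a * vdot u w.
Proof. by rewrite /vdot linearZ -scalemxAl mxE. Qed.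

Lemma vdotNl u w : vdot (- u) w = - vdot u w.
Proof. by rewrite -scaleN1r vdotZl mulN1r. Qed.

Lemma vdotBl u v w : vdot (u - v) w = vdot u w - vdot v w.
Proof. by rewrite vdotDl vdotNl. Qed.

Lemma vdot0l w : vdot 0 w = 0.
Proof. by rewrite -(scale0r 0) vdotZl mul0r. Qed.

Lemma vdotDr u v w : vdot w (u + v) = vdot w u + vdot w v.
Proof. by rewrite vdotC vdotDl !(vdotC w). Qed.

Lemma vdotZr a u w : vdot w (a *: u) = a * vdot w u.
Proof. by rewrite vdotC vdotZl vdotC. Qed.

Lemma vdotNr u w : vdot w (- u) = - vdot w u.
Proof. by rewrite vdotC vdotNl vdotC. Qed.

Lemma vdotBr u v w : vdot w (u - v) = vdot w u - vdot w v.
Proof. by rewrite vdotDr vdotNr. Qed.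

Lemma vdot0r w : vdot w 0 = 0.
Proof. by rewrite vdotC vdot0l. Qed.

Lemma vdot_delta p k : vdot p (delta_mx k 0) = p k 0.
Proof. by rewrite /vdot -colE !mxE. Qed.

Lemma vdot_delta_delta k : vdot (delta_mx k 0 : 'cV[R]_m) (delta_mx k 0) = 1.
Proof. by rewrite vdot_delta mxE !eqxx. Qed.

Lemma vdot_ge0 u : 0 <= vdot u u.
Proof. by rewrite vdotE sumr_ge0 // => i _; rewrite -expr2 sqr_ge0. Qed.

Lemma vdot_eq0 u : vdot u u = 0 -> u = 0.
Proof.
rewrite vdotE => /psumr_eq0P u0; apply/matrixP => i j; rewrite (ord1 j) mxE.
have /(_ i isT)/eqP : forall k, true -> u k 0 * u k 0 = 0.
  by apply: u0 => k _; rewrite -expr2 sqr_ge0.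
by rewrite mulf_eq0 orbb => /eqP.
Qed.

Lemma vdotI p q : (forall w, vdot p w = vdot q w) -> p = q.
Proof. by move=> pq; apply/matrixP => i j; rewrite (ord1 j) -!vdot_delta. Qed.

Lemma vdot_sqr_le u v : vdot u v ^+ 2 <= vdot u u * vdot v v.
Proof.
have [/vdot_eq0 ->|v_neq0] := eqVneq (vdot v v) 0.
  by rewrite vdot0r vdot0l expr0n mulr0.
have v_gt0 : 0 < vdot v v by rewrite lt_def v_neq0 vdot_ge0.
rewrite -(ler_pM2l v_gt0) -subr_ge0.
have := vdot_ge0 (vdot v v *: u - vdot u v *: v).
rewrite !(vdotBl, vdotBr, vdotZl, vdotZr) (vdotC v u).
nra.
Qed.

Lemma normr_vdot_le u v K :
  0 <= K -> vdot u u * vdot v v <= K ^+ 2 -> `|vdot u v| <= K.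
Proof.
move=> K_ge0 uvK; rewrite -ler_sqr ?nnegrE // real_normK ?num_real //.
exact: le_trans (vdot_sqr_le u v) uvK.
Qed.

Lemma scalar_vdotE (g : 'cV[R]_m -> R) :
  scalar g -> forall w, g w = vdot (\col_k g (delta_mx k 0)) w.
Proof.
move=> g_scalar w; have [gZ gD] := GRing.semilinear_linear g_scalar.
rewrite {1}(matrix_sum_delta w) (big_morph g gD (linear_fun0 g_scalar)) vdotE.
by apply: eq_bigr => i _; rewrite big_ord1 gZ mxE mulrC.
Qed.

Lemma vdot_trmxl (M : 'M[R]_m) p q : vdot (M^T *m p) q = vdot p (M *m q).
Proof. by rewrite /vdot trmx_mul trmxK mulmxA. Qed.

Lemma vdot_mulmx_delta (M N : 'M[R]_m) k :
  vdot (M *m delta_mx k 0) (N *m delta_mx k 0) = (M^T *m N) k k.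
Proof. by rewrite -[M]trmxK vdot_trmxl vdotC vdot_delta trmxK mulmxA -colE mxE. Qed.

Lemma vdot_mulmx_delta1 (M : 'M[R]_m) k : vdot (M *m delta_mx k 0) (delta_mx k 0) = M k k.
Proof. by rewrite vdot_delta -colE mxE. Qed.

Lemma mxrank_orthonormal2 u v :
  vdot u u = 1 -> vdot v v = 1 -> vdot u v = 0 -> \rank (row_mx u v) = 2%N.
Proof.
move=> uu1 vv1 uv0.
have gram1 : (row_mx u v)^T *m row_mx u v = 1%:M.
  rewrite tr_row_mx mul_col_row [u^T *m u]mx11_scalar [u^T *m v]mx11_scalar.
  rewrite [v^T *m u]mx11_scalar [v^T *m v]mx11_scalar.
  rewrite -/(vdot u u) -/(vdot u v) -/(vdot v u) -/(vdot v v).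
  by rewrite (vdotC v u) uu1 vv1 uv0 raddf0 -scalar_mx_block.
apply/eqP; rewrite eqn_leq rank_leq_col /=.
by have := mxrankM_maxr (row_mx u v)^T (row_mx u v); rewrite gram1 mxrank1.
Qed.

End InnerProduct.

Lemma vdot_col_mx (R : realType) m1 m2 (x y : 'cV[R]_m1) (x' y' : 'cV[R]_m2) :
  vdot (col_mx x x') (col_mx y y') = vdot x y + vdot x' y'.
Proof.
rewrite !vdotE big_split_ord /=.
by congr (_ + _); apply: eq_bigr => i _; rewrite ?col_mxEu ?col_mxEd.
Qed.

Lemma vdot_scalar_mx (R : realType) (s t : R) : vdot (s%:M : 'cV_1) t%:M = s * t.
Proof. by rewrite vdotE big_ord1 !mxE. Qed.

Lemma mxtrace_mul_tr_ge0 (R : realType) l m (M : 'M[R]_(l, m)) : 0 <= \tr (M *m M^T).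
Proof.
rewrite /mxtrace sumr_ge0 // => i _; rewrite mxE sumr_ge0 // => j _.
by rewrite mxE -expr2 sqr_ge0.
Qed.

Lemma vdot_mulmx_le (R : realType) l m (M : 'M[R]_(l, m)) (u : 'cV[R]_m) :
  vdot (M *m u) (M *m u) <= \tr (M *m M^T) * vdot u u.
Proof.
rewrite [X in X <= _]vdotE /mxtrace mulr_suml; apply: ler_sum => i _.
have -> : (M *m u) i 0 = vdot (row i M)^T u.
  by rewrite vdotE mxE; apply: eq_bigr => j _; rewrite !mxE.
rewrite -expr2; apply: le_trans (vdot_sqr_le _ _) _.
suff -> : vdot (row i M)^T (row i M)^T = (M *m M^T) i i by [].
by rewrite vdotE mxE; apply: eq_bigr => j _; rewrite !mxE.
Qed.

Section LeviCivita.
Variables (R : realType) (m : nat) (br : 'cV[R]_m -> 'cV[R]_m -> 'cV[R]_m).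
Hypothesis br_linear : forall w, linear (br^~ w).
Hypothesis brC : forall u v, br v u = - br u v.
Implicit Types (a : R) (u v w : 'cV[R]_m).
Local Notation nabla := (lc_conn br).

Lemma br_linearr w : linear (br w).
Proof.
by move=> a u v; rewrite brC br_linear (brC u w) (brC v w) scalerN opprD.
Qed.

Lemma lc_conn_vdot u v w :
  vdot (nabla u v) w = 2^-1 * (vdot (br u v) w - vdot (br v w) u + vdot (br w u) v).
Proof.
pose F w := 2^-1 * (vdot (br u v) w - vdot (br v w) u + vdot (br w u) v).
have F_scalar : scalar F.
  move=> a x y; rewrite /F br_linear br_linearr.
  rewrite !(vdotDl, vdotDr, vdotZl, vdotZr); ring.
exact: esym (scalar_vdotE F_scalar w).
Qed.

Lemma lc_conn_vdot_skew u v w : vdot (nabla u v) w = - vdot v (nabla u w).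
Proof.
rewrite (vdotC v) !lc_conn_vdot (brC u w) (brC w v) (brC u v) !vdotNl; ring.
Qed.

Lemma lc_conn_linearl v : linear (nabla ^~ v).
Proof.
move=> a u u'; apply: vdotI => w.
rewrite !(vdotDl, vdotZl, lc_conn_vdot, br_linear, br_linearr, vdotDr, vdotZr); ring.
Qed.

Lemma lc_conn_linearr u : linear (nabla u).
Proof.
move=> a v v'; apply: vdotI => w.
rewrite !(vdotDl, vdotZl, lc_conn_vdot, br_linear, br_linearr, vdotDr, vdotZr); ring.
Qed.

Lemma curv_linear2 u w : linear (fun v => curv br u v w).
Proof.
move=> a v v'; rewrite /curv br_linearr !lc_conn_linearl lc_conn_linearr.
by apply/matrixP => i j; rewrite !mxE; ring.
Qed.

Lemma curv_linear3 u v : linear (curv br u v).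
Proof.
move=> a w w'; rewrite /curv !lc_conn_linearr.
by apply/matrixP => i j; rewrite !mxE; ring.
Qed.

Lemma curv_alt u w : curv br u u w = 0.
Proof.
have bruu : br u u = 0.
  have /eqP := brC u u.
  by rewrite -addr_eq0 -mulr2n -scaler_nat scaler_eq0 pnatr_eq0 => /eqP.
by rewrite /curv bruu (linear_fun0 (lc_conn_linearl w)) !subrr.
Qed.

Lemma vdot_curv_skew u v w : vdot (curv br u v w) w = 0.
Proof.
rewrite /curv !vdotBl (lc_conn_vdot_skew u (nabla v w)) (lc_conn_vdot_skew v (nabla u w)).
have /eqP := lc_conn_vdot_skew (br u v) w w.
rewrite (vdotC w) -addr_eq0 -mulr2n mulrn_eq0 /= => /eqP->.
by rewrite (vdotC (nabla u w)) subrr subr0.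
Qed.

Lemma vdot_curv_sec u v :
  vdot (curv br u v v) u = - vdot (nabla v v) (nabla u u)
     + vdot (nabla u v) (nabla v u) - vdot (nabla (br u v) v) u.
Proof.
rewrite /curv !vdotBl (lc_conn_vdot_skew u (nabla v v)) (lc_conn_vdot_skew v (nabla u v)).
by rewrite opprK.
Qed.

Section BoundedBracket.
Variable beta : R.
Hypothesis beta_ge0 : 0 <= beta.
Hypothesis br_norm_le : forall u v, vdot (br u v) (br u v) <= beta * (vdot u u * vdot v v).

Lemma lc_conn_norm_le u v :
  vdot (nabla u v) (nabla u v) <= (1 + 2 * m%:R) * beta * (vdot u u * vdot v v).
Proof.
pose e k : 'cV[R]_m := delta_mx k 0.
have comp k : nabla u v k 0 * nabla u v k 0 <=
    vdot (br u v) (e k) ^+ 2 + vdot (br v (e k)) u ^+ 2 + vdot (br (e k) u) v ^+ 2.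
  rewrite mxE; set p := vdot _ (e k); set q := vdot _ u; set r := vdot _ v.
  have := sqr_ge0 (p + q); have := sqr_ge0 (q + r); have := sqr_ge0 (p - r); nra.
have sum_p : \sum_k vdot (br u v) (e k) ^+ 2 = vdot (br u v) (br u v).
  by rewrite vdotE; apply: eq_bigr => k _; rewrite vdot_delta expr2.
have q_le k : vdot (br v (e k)) u ^+ 2 <= beta * (vdot u u * vdot v v).
  apply: le_trans (vdot_sqr_le _ _) _; rewrite [vdot u u * _]mulrC mulrA.
  apply: ler_wpM2r; first exact: vdot_ge0.
  by have := br_norm_le v (e k); rewrite vdot_delta_delta mulr1.
have r_le k : vdot (br (e k) u) v ^+ 2 <= beta * (vdot u u * vdot v v).
  apply: le_trans (vdot_sqr_le _ _) _; rewrite mulrA.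
  apply: ler_wpM2r; first exact: vdot_ge0.
  by have := br_norm_le (e k) u; rewrite vdot_delta_delta mul1r.
rewrite {1}vdotE; apply: le_trans (ler_sum _ (fun k _ => comp k)) _.
have -> : (1 + 2 * m%:R) * beta * (vdot u u * vdot v v) =
    beta * (vdot u u * vdot v v) + \sum_(k < m) beta * (vdot u u * vdot v v)
    + \sum_(k < m) beta * (vdot u u * vdot v v).
  by rewrite sumr_const card_ord -mulr_natr; ring.
by rewrite !big_split /= sum_p !lerD ?ler_sum.
Qed.

Local Notation c := ((1 + 2 * m%:R) * beta).

Lemma abs_vdot_curv_le u v :
  `|vdot (curv br u v v) u| <= 3 * c * (vdot u u * vdot v v).
Proof.
set N := vdot u u * vdot v v.
have c_ge0 : 0 <= c by rewrite mulr_ge0 // addr_ge0 // mulr_ge0.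
have beta_le_c : beta <= c by rewrite mulrDl mul1r lerDl mulr_ge0 // mulr_ge0.
have cN_ge0 : 0 <= c * N by rewrite mulr_ge0 // mulr_ge0 // vdot_ge0.
have L := lc_conn_norm_le.
have t1 : `|vdot (nabla v v) (nabla u u)| <= c * N.
  apply: normr_vdot_le => //.
  rewrite (_ : _ ^+ 2 = c * (vdot v v * vdot v v) * (c * (vdot u u * vdot u u))); last by rewrite /N; ring.
  exact: ler_pM (vdot_ge0 _) (vdot_ge0 _) (L v v) (L u u).
have t2 : `|vdot (nabla u v) (nabla v u)| <= c * N.
  apply: normr_vdot_le => //.
  rewrite (_ : _ ^+ 2 = c * (vdot u u * vdot v v) * (c * (vdot v v * vdot u u))); last by rewrite /N; ring.
  exact: ler_pM (vdot_ge0 _) (vdot_ge0 _) (L u v) (L v u).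
have t3 : `|vdot (nabla (br u v) v) u| <= c * N.
  apply: normr_vdot_le => //.
  apply: le_trans (ler_wpM2r (vdot_ge0 u) (L (br u v) v)) _.
  apply: le_trans (_ : c * (beta * N * vdot v v) * vdot u u <= _).
    apply: ler_wpM2r; first exact: vdot_ge0.
    apply: ler_wpM2l => //; apply: ler_wpM2r; first exact: vdot_ge0.
    exact: br_norm_le.
  rewrite (_ : _ * vdot u u = beta * (c * N ^+ 2)); last by rewrite /N; ring.
  rewrite (_ : (c * N) ^+ 2 = c * (c * N ^+ 2)); last by ring.
  by rewrite ler_wpM2r // mulr_ge0 // sqr_ge0.
rewrite vdot_curv_sec.
apply: le_trans (_ : `|vdot (nabla v v) (nabla u u)| + `|vdot (nabla u v) (nabla v u)|
                     + `|vdot (nabla (br u v) v) u| <= _).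
  apply: le_trans (ler_normB _ _) _; rewrite lerD2r.
  by apply: le_trans (ler_normD _ _) _; rewrite normrN.
rewrite (_ : 3 * c * N = c * N + c * N + c * N); last by ring.
by rewrite !lerD.
Qed.

Lemma abs_vdot_curv_le_gram u v :
  `|vdot (curv br u v v) u| <= 3 * c * (vdot u u * vdot v v - vdot u v ^+ 2).
Proof.
have [/vdot_eq0 ->|uu_neq0] := eqVneq (vdot u u) 0.
  by rewrite !(vdot0l, vdot0r) normr0 mul0r expr0n subr0 mulr0.
have uu_gt0 : 0 < vdot u u by rewrite lt_def uu_neq0 vdot_ge0.
(* v' is orthogonal to u: the numerator scales by |u|^4 and |v'|^2 is |u|^2
   times the Gram determinant. *)
pose v' := vdot u u *: v + (- vdot u v) *: u.
have curv_v' w : curv br u v' w = vdot u u *: curv br u v w.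
  by rewrite curv_linear2 (GRing.scalable_linear (curv_linear2 _ _)) /= curv_alt scaler0 addr0.
have num' : vdot (curv br u v' v') u = vdot u u ^+ 2 * vdot (curv br u v v) u.
  rewrite curv_v' {1}/v' curv_linear3 (GRing.scalable_linear (curv_linear3 u v)) /=.
  by rewrite vdotZl vdotDl !vdotZl vdot_curv_skew mulr0 addr0 mulrA -expr2.
have gram' : vdot v' v' = vdot u u * (vdot u u * vdot v v - vdot u v ^+ 2).
  by rewrite /v' !(vdotDl, vdotDr, vdotZl, vdotZr) (vdotC v u); ring.
have := abs_vdot_curv_le u v'; rewrite num' gram' normrM ger0_norm ?sqr_ge0 //.
rewrite (_ : 3 * c * _ = vdot u u ^+ 2 * (3 * c * (vdot u u * vdot v v - vdot u v ^+ 2))).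
  by rewrite ler_pM2l // exprn_gt0.
by ring.
Qed.

Lemma abs_sec_curv_le u v : `|sec_curv br u v| <= 3 * c.
Proof.
have c3_ge0 : 0 <= 3 * c by rewrite !mulr_ge0 // addr_ge0 // mulr_ge0.
rewrite /sec_curv; set G := _ - _.
have [->|G_neq0] := eqVneq G 0; first by rewrite invr0 mulr0 normr0.
have G_gt0 : 0 < G by rewrite lt_def G_neq0 subr_ge0 vdot_sqr_le.
rewrite normrM normfV (gtr0_norm G_gt0) ler_pdivrMr //.
exact: abs_vdot_curv_le_gram.
Qed.

End BoundedBracket.

End LeviCivita.

Section SupAbsSec.
Variables (R : realType) (m : nat) (br : 'cV[R]_m -> 'cV[R]_m -> 'cV[R]_m) (K : R).
Hypothesis abs_sec_le : forall u v, `|sec_curv br u v| <= K.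
Implicit Types u v : 'cV[R]_m.

Let abs_sec_ubound : ubound [set x : R | exists u v : 'cV[R]_m,
  \rank (row_mx u v) = 2%N /\ x = `|sec_curv br u v|] K.
Proof. by move=> _ [u [v [_ ->]]]. Qed.

Lemma le_sup_abs_sec u v :
  \rank (row_mx u v) = 2%N -> `|sec_curv br u v| <= sup_abs_sec br.
Proof.
move=> uv2; apply: sup_upper_bound; last by exists u, v.
by split; [exists `|sec_curv br u v|, u, v | exists K; exact: abs_sec_ubound].
Qed.

Lemma sup_abs_sec_le u v : \rank (row_mx u v) = 2%N -> sup_abs_sec br <= K.
Proof. by move=> uv2; apply: ge_sup abs_sec_ubound; exists `|sec_curv br u v|, u, v. Qed.

End SupAbsSec.

Section SolvableLieAlgebra.
Context {R : realType} {n : nat}.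
Variable C : 'M[R]_n.
Local Notation br := (solv_bracket C).
Implicit Types (u v w : 'cV[R]_(n + 1)) (x y : 'cV[R]_n) (s t : R).

Lemma cV_col_mx_scalar u : u = col_mx (usubmx u) (dsubmx u 0 0)%:M.
Proof. by rewrite -mx11_scalar vsubmxK. Qed.

Lemma solv_bracket_col x s y t :
  br (col_mx x s%:M) (col_mx y t%:M) = col_mx (s *: (C *m y) - t *: (C *m x)) 0%:M.
Proof. by rewrite /solv_bracket !col_mxKu !col_mxKd !mxE !mulr1n raddf0. Qed.

Lemma solv_bracket_linear w : linear (br^~ w).
Proof.
move=> a u v; rewrite /solv_bracket scale_col_mx add_col_mx scaler0 addr0.
have -> : usubmx (a *: u + v) = a *: usubmx u + usubmx v by apply/matrixP => i j; rewrite !mxE.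
congr col_mx; rewrite mulmxDr -scalemxAr !mxE.
move: (C *m usubmx u) (C *m usubmx v) (C *m usubmx w) => X Y Z.
by apply/matrixP => i j; rewrite !mxE; ring.
Qed.

Lemma solv_bracketC u v : br v u = - br u v.
Proof. by rewrite /solv_bracket opp_col_mx oppr0 opprB. Qed.

Lemma solv_bracket_norm_le u v :
  vdot (br u v) (br u v) <= 4 * \tr (C *m C^T) * (vdot u u * vdot v v).
Proof.
rewrite (cV_col_mx_scalar u) (cV_col_mx_scalar v) solv_bracket_col.
move: (usubmx u) (dsubmx u 0 0) (usubmx v) (dsubmx v 0 0) => x s y t.
rewrite !vdot_col_mx !vdot_scalar_mx mul0r addr0.
have T_ge0 := mxtrace_mul_tr_ge0 C; set T := \tr _ in T_ge0 *.
have Cx := ler_wpM2l (sqr_ge0 t) (vdot_mulmx_le C x).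
have Cy := ler_wpM2l (sqr_ge0 s) (vdot_mulmx_le C y).
have := vdot_ge0 (s *: (C *m y) + t *: (C *m x)).
rewrite !(vdotDl, vdotBl, vdotDr, vdotBr, vdotZl, vdotZr) (vdotC (C *m x)) -/T => para.
apply: le_trans (_ : 2 * (s ^+ 2 * (T * vdot y y)) + 2 * (t ^+ 2 * (T * vdot x x)) <= _).
  by rewrite !(vdotNl, vdotNr, vdotZl, vdotZr) (vdotC (C *m x)); lra.
have x_ge0 := vdot_ge0 x; have y_ge0 := vdot_ge0 y.
have := mulr_ge0 (mulr_ge0 T_ge0 x_ge0) y_ge0.
have := mulr_ge0 (mulr_ge0 T_ge0 (sqr_ge0 s)) y_ge0.
have := mulr_ge0 (mulr_ge0 T_ge0 (sqr_ge0 t)) x_ge0.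
have := mulr_ge0 (mulr_ge0 T_ge0 (sqr_ge0 s)) (sqr_ge0 t).
nra.
Qed.

Lemma lc_conn_solv x s y t :
  lc_conn br (col_mx x s%:M) (col_mx y t%:M) =
  col_mx (2^-1 *: (s *: ((C - C^T) *m y) - t *: ((C + C^T) *m x)))
         (2^-1 * vdot ((C + C^T) *m x) y)%:M.
Proof.
apply: vdotI => w; rewrite (lc_conn_vdot solv_bracket_linear solv_bracketC).
rewrite (cV_col_mx_scalar w); move: (usubmx w) (dsubmx w 0 0) => z r.
rewrite !solv_bracket_col !vdot_col_mx !vdot_scalar_mx.
rewrite !(vdotDl, vdotBl, vdotZl, mulmxDl, mulmxBl, mulNmx, vdotNl, vdot_trmxl).
by rewrite !(vdotC _ (C *m _)); ring.
Qed.

Definition frameV (i : 'I_n) : 'cV[R]_(n + 1) := col_mx (delta_mx i 0) 0%:M.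
Definition frameY : 'cV[R]_(n + 1) := col_mx 0 1%:M.

Lemma vdot_frameV i : vdot (frameV i) (frameV i) = 1.
Proof. by rewrite vdot_col_mx vdot_delta_delta vdot_scalar_mx mulr0 addr0. Qed.

Lemma vdot_frameY : vdot frameY frameY = 1.
Proof. by rewrite vdot_col_mx vdot0l vdot_scalar_mx mulr1 add0r. Qed.

Lemma vdot_frameVY i : vdot (frameV i) frameY = 0.
Proof. by rewrite vdot_col_mx vdot0r vdot_scalar_mx mul0r addr0. Qed.

Lemma mxrank_frame i : \rank (row_mx (frameV i) frameY) = 2%N.
Proof. exact: mxrank_orthonormal2 (vdot_frameV i) vdot_frameY (vdot_frameVY i). Qed.

Lemma sec_curv_frame i (e := delta_mx i 0 : 'cV[R]_n) :
  sec_curv br (frameV i) frameY =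
  - 4^-1 * vdot ((C + C^T) *m e) ((C - C^T) *m e) - 2^-1 * vdot ((C + C^T) *m (C *m e)) e.
Proof.
rewrite /sec_curv vdot_frameV vdot_frameY vdot_frameVY expr0n subr0 mulr1 invr1 mulr1.
rewrite (vdot_curv_sec solv_bracket_linear solv_bracketC) /frameV /frameY.
rewrite solv_bracket_col !lc_conn_solv !vdot_col_mx !vdot_scalar_mx.
rewrite !(mulmx0, scaler0, scale0r, scale1r, subr0, sub0r, vdot0l, vdot0r, mulr0, mul0r, addr0, add0r).
rewrite !(vdotZl, vdotZr, vdotNl, vdotNr, mulmxN, scalerN, opprK).
rewrite (_ : 4^-1 = 2^-1 * 2^-1 :> R); last by field.
ring.
Qed.

Lemma sum_sec_curv_frame :
  \sum_i sec_curv br (frameV i) frameY = - 2^-1 * (\tr (C *m C) + \tr (C *m C^T)).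
Proof.
under eq_bigr => i _ do rewrite sec_curv_frame vdot_mulmx_delta mulmxA vdot_mulmx_delta1.
rewrite big_split /= sumrN -!mulr_sumr -!/(mxtrace _) [(C + C^T)^T]linearD /= trmxK.
rewrite !(mulmxDl, mulmxBr, mxtraceD, raddfN) /= -trmx_mul mxtrace_tr (mxtrace_mulC C^T C).
ring.
Qed.

Lemma abs_sec_curv_solv_le u v :
  `|sec_curv br u v| <= 12 * (1 + 2 * (n + 1)%:R) * \tr (C *m C^T).
Proof.
rewrite (_ : 12 * _ * _ = 3 * ((1 + 2 * (n + 1)%:R) * (4 * \tr (C *m C^T)))); last by ring.
apply: (abs_sec_curv_le solv_bracket_linear solv_bracketC _ solv_bracket_norm_le).
exact: mulr_ge0 _ (mxtrace_mul_tr_ge0 C).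
Qed.

Lemma sup_abs_sec_solv_le :
  (0 < n)%N -> sup_abs_sec br <= 12 * (1 + 2 * (n + 1)%:R) * \tr (C *m C^T).
Proof.
by move=> n_gt0; apply: sup_abs_sec_le abs_sec_curv_solv_le _ _ (mxrank_frame (Ordinal n_gt0)).
Qed.

Lemma abs_sec_curv_frame_le i : `|sec_curv br (frameV i) frameY| <= sup_abs_sec br.
Proof. exact: le_sup_abs_sec abs_sec_curv_solv_le _ _ (mxrank_frame i). Qed.

Lemma mxtrace_sqr_le_sup_abs_sec :
  2^-1 * (\tr (C *m C) + \tr (C *m C^T)) <= n%:R * sup_abs_sec br.
Proof.
rewrite -[X in X <= _]opprK -mulNr -sum_sec_curv_frame -sumrN.
apply: le_trans (_ : \sum_(i < n) sup_abs_sec br <= _).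
  by apply: ler_sum => i _; rewrite (le_trans (ler_norm _)) // normrN abs_sec_curv_frame_le.
by rewrite sumr_const card_ord mulr_natl.
Qed.

End SolvableLieAlgebra.

Lemma mxtrace_similar (R : comUnitRingType) n (P B C : 'M[R]_n) :
  P \in unitmx -> B *m P = P *m C -> \tr C = \tr B.
Proof.
move=> P_unit BPC.
by rewrite -[C]mul1mx -(mulVmx P_unit) -mulmxA -BPC mxtrace_mulC -mulmxA mulmxV // mulmx1.
Qed.

Theorem mainTheorem8 (R : realType) (n : nat) (hn : (2 <= n)%N) :
  exists tau : R, 0 < tau /\
  forall (A : 'M[int]_n) (B : 'M[R]_n),
    \det A = 1 ->
    expmx_is B (map_mx (fun z : int => z%:~R) A) ->
    exists kappa : R,
    forall (P C : 'M[R]_n),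
      P \in unitmx ->
      B *m P = P *m C ->
      let a := sup_abs_sec (@solv_bracket R n C) in
      tau^-1 * a <= \tr (C *m C^T) /\ \tr (C *m C^T) <= tau * a + kappa.
Proof.
pose tau : R := 12 * (1 + 2 * (n + 1)%:R).
have tau_gt0 : 0 < tau by rewrite mulr_gt0 // ltr_pwDl // mulr_ge0.
have n_gt0 : (0 < n)%N := ltnW hn.
exists tau; split => // A B _ _; exists (- \tr (B *m B)) => P C P_unit BPC a.
have a_le : a <= tau * \tr (C *m C^T) := sup_abs_sec_solv_le C n_gt0.
have a_ge0 : 0 <= a := le_trans (normr_ge0 _) (abs_sec_curv_frame_le C (Ordinal n_gt0)).
have trCC : \tr (C *m C) = \tr (B *m B).
  by apply: mxtrace_similar P_unit _; rewrite -mulmxA BPC !mulmxA BPC.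
have lower := mxtrace_sqr_le_sup_abs_sec C; rewrite trCC -/a in lower.
have two_n_le_tau : 2 * n%:R <= tau by rewrite /tau natrD; have := ler0n R n; lra.
split; first by rewrite ler_pdivrMl.
have := ler_wpM2r a_ge0 two_n_le_tau; lra.
Qed.
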